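(* Let $k$ be a left Noetherian ring. Any submodule of a finitely generated $\mathrm{FS}_B^{\mathrm{op}}$-module over $k$ is itself finitely generated.
   Context: $\mathrm{FS}_B$ is the category whose objects are pairs $(E,\sigma)$ with $E$ a finite set and $\sigma:E\to E$ an involution with exactly one fixed point, and whose morphisms $(E_1,\sigma_1)\to(E_2,\sigma_2)$ are surjective maps $\varphi:E_1\to E_2$ with $\varphi\circ\sigma_1=\sigma_2\circ\varphi$. Every object is isomorphic to $[-n,n]=\{-n,\dots,n\}$ with involution $k\mapsto -k$, for some $n\in\mathbb N$. An $\mathrm{FS}_B^{\mathrm{op}}$-module over $k$ is a contravariant functor from $\mathrm{FS}_B$ to the category of left $k$-modules. For an object $x$, the principal projective $P_x$ is the module sending $y$ to the free $k$-module with basis $\mathrm{Hom}_{\mathrm{FS}_B}(y,x)$, with maps given on basis elements by composition. A module $M$ is finitely generated if there are finitely many objects $x_1,\dots,x_r$ and a surjection $\bigoplus_i P_{x_i}\to M$. *)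

From mathcomp Require Import all_boot all_order all_algebra.
Set Implicit Arguments. Unset Strict Implicit. Unset Printing Implicit Defensive.
Import GRing.Theory.
Local Open Scope ring_scope.

(** Skeleton of FS_B: the object [-n,n] with involution k |-> -k is encoded as
    'I_(2n+1), where the index i stands for the integer i - n; the involution
    is then rev_ord (i |-> 2n - i), whose unique fixed point is n (i.e. 0). *)
Definition obj (n : nat) : finType := 'I_(2 * n + 1).

Definition sigmaB (n : nat) (i : obj n) : obj n := rev_ord i.

Definition is_mor (n m : nat) (f : {ffun obj n -> obj m}) : bool :=
  [forall i, f (sigmaB i) == sigmaB (f i)] && [forall j, exists i, f i == j].

Definition id_mor (n : nat) : {ffun obj n -> obj n} := [ffun i => i].

Definition comp_mor (n m p : nat) (g : {ffun obj m -> obj p})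
  (f : {ffun obj n -> obj m}) : {ffun obj n -> obj p} := [ffun i => g (f i)].

(** An FS_B^op-module over k: a contravariant functor from (the skeleton of)
    FS_B to left k-modules.  [act f] is M(f) : M m -> M n for f : n -> m;
    its values on non-morphisms f are irrelevant. *)
Record FSBop_module (k : pzRingType) := {
  Mod :> nat -> lmodType k;
  act : forall n m, {ffun obj n -> obj m} -> Mod m -> Mod n;
  act_add : forall n m (f : {ffun obj n -> obj m}) (x y : Mod m),
      is_mor f -> act f (x + y) = act f x + act f y;
  act_scale : forall n m (f : {ffun obj n -> obj m}) (a : k) (x : Mod m),
      is_mor f -> act f (a *: x) = a *: act f x;
  act_id : forall n (x : Mod n), act (id_mor n) x = x;
  act_comp : forall n m p (f : {ffun obj n -> obj m}) (g : {ffun obj m -> obj p})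
      (x : Mod p), is_mor f -> is_mor g ->
      act (comp_mor g f) x = act f (act g x)
}.
Arguments act {k} f0 {n m}.

Definition is_submodule (k : pzRingType) (M : FSBop_module k)
  (N : forall n, M n -> Prop) : Prop :=
  [/\ (forall n, N n 0),
      (forall n (x y : M n), N n x -> N n y -> N n (x + y)),
      (forall n (a : k) (x : M n), N n x -> N n (a *: x)) &
      (forall n m (f : {ffun obj n -> obj m}) (x : M m),
          is_mor f -> N m x -> N n (act M f x))].

(** y : M m lies in the image, at object m, of the map
    \bigoplus_{i<r} P_{deg i} -> M sending the generator id of P_{deg i}
    to x i (so the basis element f : m -> deg i goes to M(f)(x i)). *)
Definition generated_by (k : pzRingType) (M : FSBop_module k) (r : nat)
  (deg : 'I_r -> nat) (x : forall i, M (deg i)) (m : nat) (y : M m) : Prop :=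
  exists c : forall i : 'I_r, {ffun obj m -> obj (deg i)} -> k,
    y = \sum_(i < r) \sum_(f : {ffun obj m -> obj (deg i)} | is_mor f)
          c i f *: act M f (x i).

Definition fg_submodule (k : pzRingType) (M : FSBop_module k)
  (N : forall n, M n -> Prop) : Prop :=
  exists (r : nat) (deg : 'I_r -> nat) (x : forall i, M (deg i)),
    (forall i, N (deg i) (x i)) /\
    (forall m (y : M m), N m y -> generated_by x y).

Definition fg_module (k : pzRingType) (M : FSBop_module k) : Prop :=
  @fg_submodule k M (fun _ _ => True).

Definition is_left_ideal (k : pzRingType) (I : k -> Prop) : Prop :=
  [/\ I 0, (forall x y, I x -> I y -> I (x + y)) &
      (forall a x, I x -> I (a * x))].

Definition left_noetherian (k : pzRingType) : Prop :=
  forall I : k -> Prop, is_left_ideal I ->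
    exists (r : nat) (s : 'I_r -> k), (forall i, I (s i)) /\
      (forall y, I y -> exists c : 'I_r -> k, y = \sum_(i < r) c i * s i).

From mathcomp Require Import all_boot all_order all_algebra.
From mathcomp Require Import zify.
From Stdlib Require Import Classical ClassicalEpsilon.
Set Implicit Arguments. Unset Strict Implicit. Unset Printing Implicit Defensive.
Import GRing.Theory.

(** Noetherianity of FS_B^op-modules, by the Groebner method of Sam and
    Snowden.  Fix generators [x i] of M in degrees [deg i]; an element of
    M(m) is then the expansion [expand c] of a coefficient vector [c] on the
    monomials [(i, f : [-m, m] -> [-deg i, deg i])].
    - Combinatorics: Higman's lemma (by a minimal bad sequence) shows that
      words over a finite alphabet are well-quasi-ordered; a wqo-indexed
      family of left ideals of a left Noetherian ring has a finite
      "Groebner basis" ([wqo_basis]).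
    - FS_B: ordered surjections are closed under composition and compatible
      with a lexicographic monomial order; monomials whose encoding words
      embed as subsequences differ by an ordered surjection, so monomials
      under this divisibility form a wqo ([mon_dvd_wqo]).
    - Modules: pulling back along an ordered surjection preserves leading
      terms, so leading terms of elements of N are cancelled by multiples of a
      finite basis ([cancel_leading]); induction on the leading monomial
      shows that the basis generates N ([basis_generates]).
    The main theorem applies [wqo_basis] to the leading-coefficient ideals. *)

Lemma choice_fun (T : Type) (A : T -> Type) (R : forall t, A t -> Prop) :
  (forall t, exists a, R t a) -> exists g : forall t, A t, forall t, R t (g t).
Proof.
move=> H; exists (fun t => proj1_sig (constructive_indefinite_description _ (H t))).
by move=> t; case: constructive_indefinite_description.
Qed.

Lemma classical_least (P : nat -> Prop) n :
  P n -> exists m, P m /\ forall m', m' < m -> ~ P m'.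
Proof.
elim/ltn_ind: n => n IH Pn.
case: (classic (exists2 m', m' < n & P m')) => [[m' lt Pm']|H]; first exact: IH lt Pm'.
by exists n; split=> // m' lt Pm'; apply: H; exists m'.
Qed.

Definition upd (A : Type) (s : nat -> A) (n : nat) (a : A) : nat -> A :=
  fun j => if j == n then a else s j.

(** Dependent choice, in the form used to build sequences term by term:
    [Good s n] is a property of the first [n] terms of [s], which can always
    be extended by one more term. *)
Lemma dependent_choice (A : Type) (a0 : A) (Good : (nat -> A) -> nat -> Prop) :
  (forall s s' n, (forall j, j < n -> s j = s' j) -> Good s n -> Good s' n) ->
  Good (fun _ => a0) 0 ->
  (forall s n, Good s n -> exists a, Good (upd s n a) n.+1) ->
  exists S : nat -> A, forall n, Good S n.
Proof.
move=> Gext G0 Gstep.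
have [next Hnext] : exists next : (nat -> A) * nat -> A,
    forall sn, Good sn.1 sn.2 -> Good (upd sn.1 sn.2 (next sn)) sn.2.+1.
  apply: (choice_fun (R := fun sn a => Good sn.1 sn.2 -> Good (upd sn.1 sn.2 a) sn.2.+1)).
  move=> [s n] /=.
  case: (classic (Good s n)) => [/Gstep [a Ha]|nG]; first by exists a.
  by exists a0.
pose fix T n := if n is n'.+1 then upd (T n') n' (next (T n', n')) else fun _ => a0.
have GT n : Good (T n) n by elim: n => //= n IH; exact: (Hnext (T n, n) IH).
have T_stable n j : j < n -> T n j = T j.+1 j.
  elim: n => // n IH; rewrite ltnS leq_eqVlt => /orP[/eqP->|lt] /=.
    by rewrite /upd eqxx.
  by rewrite /upd (ltn_eqF lt) IH.
by exists (fun n => T n.+1 n) => n; apply: Gext (GT n) => j /T_stable.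
Qed.

Lemma increasing_enum (P : nat -> Prop) :
  (forall N, exists j, N <= j /\ P j) ->
  exists sg : nat -> nat, (forall t, P (sg t)) /\ (forall t, sg t < sg t.+1).
Proof.
move=> H; have [g Hg] := choice_fun H.
exists (fun t => iter t.+1 (fun j => g j.+1) 0).
by split=> t /=; [exact: (Hg _).2 | exact: (Hg _).1].
Qed.

Lemma infinitely_often (T : finType) (f : nat -> T) :
  exists t, forall N, exists j, N <= j /\ f j = t.
Proof.
apply: NNPP => H.
have Hbound t : exists N, forall j, N <= j -> f j <> t.
  apply: NNPP => Ht; apply: H; exists t => N.
  apply: NNPP => HN; apply: Ht; exists N => j le E; apply: HN; by exists j.
have [Nf HN] := choice_fun Hbound.
by apply: (HN (f (\max_(t : T) Nf t)%N) _ (leq_bigmax _)).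
Qed.

Definition bad_seq (T : eqType) (w : nat -> seq T) : Prop :=
  forall i j, i < j -> ~ subseq (w i) (w j).

Lemma minimal_bad_sequence (T : eqType) (w : nat -> seq T) : bad_seq w ->
  exists B : nat -> seq T, bad_seq B /\
    forall n w', bad_seq w' -> (forall l, l < n -> w' l = B l) ->
      size (B n) <= size (w' n).
Proof.
move=> bw.
pose extends (s : nat -> seq T) n w' := bad_seq w' /\ forall l, l < n -> w' l = s l.
pose Good s n := (exists w', extends s n w') /\
  forall j, j < n -> forall w', extends s j w' -> size (s j) <= size (w' j).
have [B GB] : exists B, forall n, Good B n.
  apply: (@dependent_choice _ [::] Good) => [s s' n E [[w' [b1 b2]] b3]||s n [[w' ext] Hmin]].
  - split; first by exists w'; split=> // j lt; rewrite b2 // E.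
    move=> j lt w'' [e1 e2]; rewrite -E //; apply: (b3 j lt w''); split=> // l lt'.
    by rewrite e2 // E //; exact: ltn_trans lt' lt.
  - by split=> //; exists w.
  - pose P m := exists2 w'', extends s n w'' & size (w'' n) = m.
    have [m [[w'' [c1 c2] c3] Hm]] := @classical_least P _ (ex_intro2 _ _ w' ext erefl).
    exists (w'' n); split.
      exists w''; split=> // j; rewrite ltnS leq_eqVlt /upd => /orP[/eqP->|lt].
        by rewrite eqxx.
      by rewrite (ltn_eqF lt) c2.
    move=> j; rewrite ltnS leq_eqVlt /upd => /orP[/eqP->|lt] w3 [d1 d2].
      rewrite eqxx c3 leqNgt; apply/negP => lt3; apply: (Hm _ lt3); exists w3 => //.
      by split=> // l lt'; rewrite d2 // (ltn_eqF lt').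
    rewrite (ltn_eqF lt); apply: (Hmin j lt w3); split=> // l lt'.
    by rewrite d2 // (ltn_eqF (ltn_trans lt' lt)).
exists B; split=> [i j lt|n w' bw' E]; last first.
  by have [_ Hmin] := GB n.+1; apply: (Hmin n (ltnSn n) w').
have [[w' [b1 b2]] _] := GB j.+1.
by rewrite -!b2 //; [apply: b1 | exact: ltn_trans lt _].
Qed.

Lemma higman (S : finType) (w : nat -> seq S) :
  exists i j, i < j /\ subseq (w i) (w j).
Proof.
apply: NNPP => Hgood.
have bw : bad_seq w by move=> i j lt sub; apply: Hgood; exists i, j.
have [B [Bbad Bmin]] := minimal_bad_sequence bw.
have Bne j : B j <> [::] by move=> E; apply: (Bbad j j.+1) => //; rewrite E sub0seq.
have [o Ho] := infinitely_often (fun j => ohead (B j)).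
have [sg [Psg Isg]] := increasing_enum Ho.
have sg_lt := homo_ltn ltn_trans Isg.
have sg_le := homo_leq leqnn leq_trans (fun t => ltnW (Isg t)).
case: o {Ho} Psg => [a|] Psg; last by have := Psg 0; case: (B (sg 0)) (Bne (sg 0)).
have Ha t : B (sg t) = a :: behead (B (sg t)).
  by have := Psg t; case: (B (sg t)) (Bne (sg t)) => [|b s] //= _ [->].
pose w' j := if j < sg 0 then B j else behead (B (sg (j - sg 0))).
have w'bad : bad_seq w'.
  move=> i j lt; rewrite /w'; case: (ltnP j (sg 0)) => hj.
    by rewrite (ltn_trans lt hj); apply: Bbad.
  case: (ltnP i (sg 0)) => hi sub.
    apply: (Bbad i (sg (j - sg 0))); first exact: leq_trans hi (sg_le _ _ (leq0n _)).
    by apply: subseq_trans sub _; rewrite [X in subseq _ X]Ha subseq_cons.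
  apply: (Bbad (sg (i - sg 0)) (sg (j - sg 0))); first by apply: sg_lt; lia.
  by rewrite Ha [X in subseq _ X]Ha /= eqxx.
have w'B l : l < sg 0 -> w' l = B l by rewrite /w' => ->.
by have := Bmin (sg 0) w' w'bad w'B; rewrite /w' ltnn subnn {1}Ha /= ltnn.
Qed.

Definition wqo_on (X : Type) (valid : X -> Prop) (le : X -> X -> Prop) : Prop :=
  forall s : nat -> X, (forall n, valid (s n)) -> exists i j, i < j /\ le (s i) (s j).

Lemma wqo_chain (X : Type) (valid : X -> Prop) (le : X -> X -> Prop) :
  (forall u v w, le u v -> le v w -> le u w) -> wqo_on valid le ->
  forall u : nat -> X, (forall n, valid (u n)) ->
  exists rho : nat -> nat, (forall t, rho t < rho t.+1) /\
    (forall t s, t < s -> le (u (rho t)) (u (rho s))).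
Proof.
move=> le_trans wqo u vu.
(* Beyond some index N, every term is below a later one: otherwise the
   "terminal" terms would form a bad sequence. *)
have [N HN] : exists N, forall n, N <= n -> exists n', n < n' /\ le (u n) (u n').
  apply: NNPP => H.
  have Hterm N : exists j, N <= j /\ (forall n', j < n' -> ~ le (u j) (u n')).
    apply: NNPP => H2; apply: H; exists N => n le_n.
    apply: NNPP => H3; apply: H2; exists n; split=> // n' lt E; apply: H3; by exists n'.
  have [tau [Pt It]] := increasing_enum Hterm.
  have [i [j [lt E]]] := wqo (fun t => u (tau t)) (fun t => vu _).
  by apply: (Pt i) E; apply: homo_ltn ltn_trans It _ _ lt.
have [g Hg] : exists g : nat -> nat, forall n, N <= n -> n < g n /\ le (u n) (u (g n)).
  apply: (choice_fun (R := fun n m => N <= n -> n < m /\ le (u n) (u m))) => n.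
  by case: (leqP N n) => [/HN [n' Hn']|_]; [exists n' | exists 0].
pose rho t := iter t g N.
have rN t : N <= rho t by elim: t => //= t IH; exact: leq_trans IH (ltnW (Hg _ IH).1).
exists rho; split=> [t|]; first exact: (Hg _ (rN t)).1.
apply: (homo_ltn (r := fun a b => le (u a) (u b))) => [a b c|t]; first exact: le_trans.
exact: (Hg _ (rN t)).2.
Qed.

Section NoetherianBasis.
Local Open Scope ring_scope.
Variable k : pzRingType.

Definition in_prefix_ideal (A : nat -> k) (s : nat) (a : k) : Prop :=
  exists c : nat -> k, a = \sum_(t < s.+1) c t * A t.

Lemma noetherian_stationary (A : nat -> k) :
  left_noetherian k -> exists s, in_prefix_ideal A s (A s.+1).
Proof.
move=> noeth; pose K := in_prefix_ideal A.
have K_mono s s' a : (s <= s')%N -> K s a -> K s' a.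
  move=> les [c ->]; exists (fun t => if (t < s.+1)%N then c t else 0).
  rewrite (big_ord_widen_cond s'.+1 xpredT (fun t => c t * A t)) //.
  by rewrite big_mkcond /=; apply: eq_bigr => t _; case: ifP; rewrite ?mul0r.
have K0 s : K s 0 by exists (fun _ => 0); rewrite big1 // => t _; rewrite mul0r.
have KD s a b : K s a -> K s b -> K s (a + b).
  move=> [c ->] [c' ->]; exists (fun t => c t + c' t).
  by rewrite -big_split; apply: eq_bigr => t _; rewrite mulrDl.
have KM s x a : K s a -> K s (x * a).
  move=> [c ->]; exists (fun t => x * c t).
  by rewrite mulr_sumr; apply: eq_bigr => t _; rewrite mulrA.
have K_self s : K s (A s).
  exists (fun t => if t == s then 1 else 0).
  rewrite big_ord_recr /= eqxx mul1r big1 ?add0r // => t _.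
  by rewrite (ltn_eqF (ltn_ord t)) mul0r.
pose U a := exists s, K s a.
have U_ideal : is_left_ideal U.
  split; first by exists 0%N.
    move=> a b [s Ka] [s' Kb]; exists (maxn s s'); apply: KD.
      by apply: K_mono Ka; rewrite leq_maxl.
    by apply: K_mono Kb; rewrite leq_maxr.
  by move=> x a [s Ka]; exists s; apply: KM.
have [r [g [gU gspan]]] := noeth U U_ideal.
have [sg Hsg] := choice_fun gU.
pose Sm := (\max_(i < r) sg i)%N.
exists Sm; have [c ->] := gspan _ (ex_intro _ Sm.+1 (K_self Sm.+1)).
apply: (big_ind (K Sm)) => [|a b|i _]; [exact: K0 | exact: KD |].
by apply: KM; apply: K_mono (Hsg i); exact: leq_bigmax.
Qed.

Variables (X : Type) (valid : X -> Prop) (le : X -> X -> Prop).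

Definition spanned_below (S : nat -> X * k) (n : nat) : Prop :=
  exists b : 'I_n -> k, (S n).2 = \sum_(l < n) b l * (S l).2 /\
    forall l : 'I_n, b l != 0 -> le (S l).1 (S n).1.

Lemma chain_spanned_below (S : nat -> X * k) (rho : nat -> nat) (s : nat) :
  (forall t, (rho t < rho t.+1)%N) ->
  (forall t t', (t < t')%N -> le (S (rho t)).1 (S (rho t')).1) ->
  in_prefix_ideal (fun t => (S (rho t)).2) s (S (rho s.+1)).2 ->
  spanned_below S (rho s.+1).
Proof.
move=> rho_incr rho_chain [c Ec].
have rho_lt := homo_ltn ltn_trans rho_incr.
have rho_pos : (0 < rho s.+1)%N by apply: leq_ltn_trans (rho_incr s).
pose p (t : 'I_s.+1) : 'I_(rho s.+1) := insubd (Ordinal rho_pos) (rho t).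
have pv (t : 'I_s.+1) : val (p t) = rho t.
  by rewrite /p val_insubd rho_lt.
exists (fun l => \sum_(t < s.+1 | p t == l) c t); split.
  rewrite Ec (partition_big p xpredT) //=; apply: eq_bigr => l _.
  by rewrite mulr_suml; apply: eq_bigr => t /eqP <-; rewrite pv.
move=> l nz; have [t /eqP <-] : exists t : 'I_s.+1, p t == l.
  apply: NNPP => Hl; move/negP: nz; apply; apply/eqP; rewrite big_pred0 // => t.
  by apply/negP => Et; apply: Hl; exists t.
by rewrite pv; apply: rho_chain.
Qed.

Lemma spanned_below_ext (S S' : nat -> X * k) (n : nat) :
  (forall l, (l <= n)%N -> S l = S' l) -> spanned_below S n -> spanned_below S' n.
Proof.
move=> E [b [Eb Hb]]; exists b; split=> [|l nz].
  by rewrite -E // Eb; apply: eq_bigr => l _; rewrite E // ltnW.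
by rewrite -!E ?(ltnW (ltn_ord l)) //; exact: Hb.
Qed.

Variable I : X -> k -> Prop.
Hypotheses (noeth : left_noetherian k)
  (le_trans : forall u v w, le u v -> le v w -> le u w)
  (le_wqo : wqo_on valid le).

Lemma wqo_basis :
  exists (J : nat) (us : 'I_J -> X) (as_ : 'I_J -> k),
    (forall j, valid (us j) /\ I (us j) (as_ j)) /\
    forall v a, valid v -> I v a -> exists b : 'I_J -> k,
      a = \sum_(j < J) b j * as_ j /\ forall j, b j != 0 -> le (us j) v.
Proof.
apply: NNPP => H.
have H' J (us : 'I_J -> X) (as_ : 'I_J -> k) :
    (forall j, valid (us j) /\ I (us j) (as_ j)) ->
    exists v a, valid v /\ I v a /\ ~ exists b : 'I_J -> k,
      a = \sum_(j < J) b j * as_ j /\ forall j, b j != 0 -> le (us j) v.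
  move=> Hv; apply: NNPP => H2; apply: H; exists J, us, as_; split=> // v a vv Iv.
  by apply: NNPP => H3; apply: H2; exists v, a.
have empty (T : Type) : 'I_0 -> T by case.
have [v0 [a0 _]] := H' 0%N (empty _ ) (empty _) (fun j => empty _ j).
pose Good (S : nat -> X * k) n := forall j, (j < n)%N ->
  [/\ valid (S j).1, I (S j).1 (S j).2 & ~ spanned_below S j].
have [S GS] : exists S, forall n, Good S n.
  apply: (@dependent_choice _ (v0, a0) Good) => [s s' n E G j lt||s n G].
  - have [g1 g2 g3] := G j lt; rewrite -E //; split=> // /spanned_below_ext sp.
    by apply: g3; apply: sp => l lj; rewrite E //; exact: leq_ltn_trans lj lt.
  - by [].
  - have [v [a [vv [Iv Hn]]]] := H' n (fun l => (s l).1) (fun l => (s l).2)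
      (fun l => let: And3 g1 g2 _ := G l (ltn_ord l) in conj g1 g2).
    exists (v, a) => j; rewrite ltnS leq_eqVlt /upd => /orP[/eqP->|lt].
      rewrite eqxx; split=> // -[b [Eb Hb]]; apply: Hn; exists b; split.
        move: Eb; rewrite eqxx /= => ->.
        by apply: eq_bigr => l _; rewrite (ltn_eqF (ltn_ord l)).
      by move=> l /Hb; rewrite eqxx (ltn_eqF (ltn_ord l)).
    rewrite (ltn_eqF lt); have [g1 g2 g3] := G j lt; split=> // /spanned_below_ext sp.
    by apply: g3; apply: sp => l lj; rewrite (ltn_eqF (leq_ltn_trans lj lt)).
have valid_S n : valid (S n).1 by case: (GS n.+1 n (ltnSn n)).
have [rho [rho_incr rho_chain]] := wqo_chain le_trans le_wqo valid_S.
have [s Hs] := noetherian_stationary (fun t => (S (rho t)).2) noeth.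
have [_ _] := GS _ _ (ltnSn (rho s.+1)); apply.
exact: chain_spanned_below rho_incr rho_chain Hs.
Qed.
End NoetherianBasis.

Lemma center_lt m : m < 2 * m + 1. Proof. lia. Qed.

(** The fixed point [0] of [[-m, m]], and the positive points [q + 1]. *)
Definition center (m : nat) : obj m := Ordinal (center_lt m).
Definition pos (m q : nat) : obj m := insubd (center m) (m + q.+1).

Definition absB (m : nat) (u : obj m) : nat := if m <= u then u - m else m - u.

Lemma val_pos m q : q < m -> nat_of_ord (pos m q) = m + q.+1.
Proof. by move=> h; rewrite /pos val_insubd; case: ifP => //; lia. Qed.

Lemma val_sigma m (u : obj m) : nat_of_ord (sigmaB u) = 2 * m - u.
Proof. by rewrite /sigmaB /=; have := ltn_ord u; lia. Qed.

Lemma val_obj m (u : obj m) : nat_of_ord u <= 2 * m.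
Proof. by have := ltn_ord u; lia. Qed.

Lemma sigmaK m (u : obj m) : sigmaB (sigmaB u) = u.
Proof. by apply: ord_inj; rewrite !val_sigma; have := val_obj u; lia. Qed.

Lemma sigma_center m : sigmaB (center m) = center m.
Proof. by apply: ord_inj; rewrite val_sigma /=; lia. Qed.

Lemma obj_cases m (u : obj m) :
  u = center m \/ (exists2 q, q < m & u = pos m q) \/
  (exists2 q, q < m & u = sigmaB (pos m q)).
Proof.
have := val_obj u; case: (ltngtP (nat_of_ord u) m) => h hu.
- right; right; exists (m - (nat_of_ord u).+1); first lia.
  by apply: ord_inj; rewrite val_sigma val_pos; lia.
- right; left; exists (nat_of_ord u - m.+1); first lia.
  by apply: ord_inj; rewrite val_pos; lia.
- by left; apply: ord_inj.
Qed.

Lemma absB_sigma m (u : obj m) : absB (sigmaB u) = absB u.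
Proof. by rewrite /absB val_sigma; have := val_obj u; case: ifP; case: ifP; lia. Qed.

Lemma absB_pos m q : q < m -> absB (pos m q) = q.+1.
Proof. by move=> h; rewrite /absB val_pos //; case: ifP; lia. Qed.

Lemma absB_center m : absB (center m) = 0.
Proof. by rewrite /absB /= leqnn subnn. Qed.

Lemma absB_le m (u : obj m) : absB u <= m.
Proof. by rewrite /absB; have := val_obj u; case: ifP; lia. Qed.

Lemma absB_eq m (u v : obj m) : absB u = absB v ->
  nat_of_ord u = v \/ nat_of_ord u = 2 * m - v.
Proof. by rewrite /absB; have := val_obj u; have := val_obj v; case: ifP; case: ifP; lia. Qed.

Lemma absB0 m (u : obj m) : absB u = 0 -> u = center m.
Proof. by rewrite /absB => h; apply: ord_inj; move: h; have := val_obj u; case: ifP => /=; lia. Qed.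

Lemma absB_small m (u : obj m) q : absB u <= q ->
  u = center m \/ exists q', [/\ q' < q, q' < m & (u = pos m q' \/ u = sigmaB (pos m q'))].
Proof.
case: (obj_cases u) => [->|[[q' lq ->]|[q' lq ->]]]; first by left.
- by rewrite absB_pos // => h; right; exists q'; split=> //; left.
- by rewrite absB_sigma absB_pos // => h; right; exists q'; split=> //; right.
Qed.

Section Morphisms.
Variables (n x : nat) (f : {ffun obj n -> obj x}).
Hypothesis f_mor : is_mor f.

Lemma mor_sigma u : f (sigmaB u) = sigmaB (f u).
Proof. by case/andP: f_mor => /forallP H _; apply/eqP. Qed.

Lemma mor_surj v : exists u, f u = v.
Proof. by case/andP: f_mor => _ /forallP /(_ v) /existsP [u /eqP]; exists u. Qed.

Lemma mor_val_sigma u : nat_of_ord (f (sigmaB u)) = 2 * x - f u.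
Proof. by rewrite mor_sigma val_sigma. Qed.

Lemma mor_center : f (center n) = center x.
Proof.
apply: ord_inj; have := mor_val_sigma (center n).
by rewrite sigma_center; have := val_obj (f (center n)); rewrite /=; lia.
Qed.

Lemma mor_absB_attained j : 0 < j -> j <= x ->
  exists q, (q < n) && (absB (f (pos n q)) == j).
Proof.
move=> j0 jx; have [u Hu] := mor_surj (pos x j.-1).
have aj : absB (pos x j.-1) = j by rewrite absB_pos; lia.
case: (obj_cases u) => [E|[[q lq E]|[q lq E]]]; subst u.
- by move: aj; rewrite -Hu mor_center absB_center; lia.
- by exists q; rewrite lq Hu aj eqxx.
- by exists q; rewrite lq -aj -Hu mor_sigma absB_sigma eqxx.
Qed.
End Morphisms.

Lemma comp_is_mor n m p (f : {ffun obj n -> obj m}) (g : {ffun obj m -> obj p}) :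
  is_mor f -> is_mor g -> is_mor (comp_mor g f).
Proof.
move=> Hf Hg; apply/andP; split.
  by apply/forallP => u; rewrite !ffunE !mor_sigma.
apply/forallP => w; have [v <-] := mor_surj Hg w; have [u <-] := mor_surj Hf v.
by apply/existsP; exists u; rewrite ffunE.
Qed.

Lemma mor_eq_pos m x x' (f : {ffun obj m -> obj x}) (f' : {ffun obj m -> obj x'}) :
  x = x' -> is_mor f -> is_mor f' ->
  (forall q, q < m -> nat_of_ord (f (pos m q)) = f' (pos m q)) ->
  forall u, nat_of_ord (f u) = f' u.
Proof.
move=> ex Hf Hf' E u; case: (obj_cases u) => [->|[[q lq ->]|[q lq ->]]].
- by rewrite !mor_center.
- exact: E.
- by rewrite !mor_val_sigma // E // ex.
Qed.

Lemma mor_comp_cancel p m x x' (f : {ffun obj m -> obj x}) (f' : {ffun obj m -> obj x'})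
  (phi : {ffun obj p -> obj m}) : is_mor phi ->
  (forall u, nat_of_ord (comp_mor f phi u) = comp_mor f' phi u) ->
  forall v, nat_of_ord (f v) = f' v.
Proof. by move=> H E v; have [u <-] := mor_surj H v; have := E u; rewrite !ffunE. Qed.

(** An ordered surjection [phi : [-p, p] -> [-n, n]] (Sam-Snowden's OS_B):
    for each [q < n], the first positive point whose image has absolute value
    [q + 1] is sent to [+(q + 1)], and these first points occur in increasing
    order of [q]. *)
Definition ordered (p n : nat) (phi : {ffun obj p -> obj n}) : Prop :=
  forall q, q < n -> exists t, [/\ t < p, phi (pos p t) = pos n q &
     forall t', t' < t -> absB (phi (pos p t')) <= q].

Definition os_mor (p n : nat) (phi : {ffun obj p -> obj n}) : Prop :=
  is_mor phi /\ ordered phi.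

Lemma os_comp a b c (psi : {ffun obj a -> obj b}) (phi : {ffun obj b -> obj c}) :
  os_mor psi -> os_mor phi -> os_mor (comp_mor phi psi).
Proof.
move=> [Mpsi Opsi] [Mphi Ophi]; split; first exact: comp_is_mor.
move=> q lq; have [t [lt Et Ht]] := Ophi q lq; have [s [ls Es Hs]] := Opsi t lt.
exists s; split=> //; first by rewrite ffunE Es.
move=> s' lt'; rewrite ffunE.
case: (absB_small (Hs s' lt')) => [->|[q' [l1 l2 [->|->]]]].
- by rewrite mor_center // absB_center.
- exact: Ht.
- by rewrite mor_sigma // absB_sigma; exact: Ht.
Qed.

Definition lexlt m x x' (f : {ffun obj m -> obj x}) (f' : {ffun obj m -> obj x'}) : bool :=
  [exists t : 'I_m, (nat_of_ord (f (pos m t)) < f' (pos m t)) &&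
    [forall t' : 'I_m, (t' < t) ==> (nat_of_ord (f (pos m t')) == f' (pos m t'))]].

Lemma lexltP m x x' (f : {ffun obj m -> obj x}) (f' : {ffun obj m -> obj x'}) :
  reflect (exists t, [/\ t < m, nat_of_ord (f (pos m t)) < f' (pos m t) &
      forall t', t' < t -> nat_of_ord (f (pos m t')) = f' (pos m t')]) (lexlt f f').
Proof.
apply: (iffP existsP) => [[t /andP[h1 /forallP h2]]|[t [lt h1 h2]]].
  exists t; split=> // t' lt'.
  have lm : t' < m by apply: ltn_trans lt' (ltn_ord t).
  by have /implyP /(_ lt') /eqP := h2 (Ordinal lm).
exists (Ordinal lt); rewrite /= h1 /=; apply/forallP => t'; apply/implyP => lt'.
by apply/eqP; apply: h2.
Qed.

Lemma lexlt_irr m x (f : {ffun obj m -> obj x}) : ~~ lexlt f f.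
Proof. by apply/lexltP => -[t [_ h _]]; rewrite ltnn in h. Qed.

Lemma lexlt_trans m x x' x'' (f : {ffun obj m -> obj x}) (f' : {ffun obj m -> obj x'})
  (f'' : {ffun obj m -> obj x''}) : lexlt f f' -> lexlt f' f'' -> lexlt f f''.
Proof.
move=> /lexltP [t [lt h1 h2]] /lexltP [t' [lt' h1' h2']]; apply/lexltP.
case: (ltngtP t t') => c.
- exists t; split=> //; first by rewrite -(h2' t c).
  by move=> s ls; rewrite h2 // h2' //; apply: ltn_trans ls c.
- exists t'; split=> //; first by rewrite (h2 t' c).
  by move=> s ls; rewrite h2 ?h2' //; apply: ltn_trans ls c.
- subst t'; exists t; split=> //; first exact: ltn_trans h1 h1'.
  by move=> s ls; rewrite h2 ?h2'.
Qed.

Lemma lexlt_total m x x' (f : {ffun obj m -> obj x}) (f' : {ffun obj m -> obj x'}) :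
  x = x' -> is_mor f -> is_mor f' -> (exists u, nat_of_ord (f u) <> f' u) ->
  lexlt f f' \/ lexlt f' f.
Proof.
move=> ex Hf Hf' [u Hu].
have ex1 : exists q, (q < m) && (nat_of_ord (f (pos m q)) != f' (pos m q)).
  apply: NNPP => H; apply: Hu; apply: (mor_eq_pos ex Hf Hf') => q lq.
  by apply/eqP; apply: negbNE; apply/negP => nq; apply: H; exists q; rewrite lq.
case: (ex_minnP ex1) => t /andP[lt ne] Hmin.
have Heq t' : t' < t -> nat_of_ord (f (pos m t')) = f' (pos m t').
  move=> lt'; apply/eqP; apply: negbNE; apply/negP => nq.
  by have := Hmin t'; rewrite (ltn_trans lt' lt) nq => /(_ isT); lia.
case: (ltngtP (nat_of_ord (f (pos m t))) (f' (pos m t))) => c.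
- by left; apply/lexltP; exists t.
- by right; apply/lexltP; exists t; split=> // t' lt'; rewrite Heq.
- by rewrite c eqxx in ne.
Qed.

Lemma lexlt_comp p m x x' (f : {ffun obj m -> obj x}) (f' : {ffun obj m -> obj x'})
  (phi : {ffun obj p -> obj m}) :
  x = x' -> is_mor f -> is_mor f' -> os_mor phi -> lexlt f f' ->
  lexlt (comp_mor f phi) (comp_mor f' phi).
Proof.
move=> ex Hf Hf' [Mphi Ophi] /lexltP [t [lt h1 h2]].
have [t0 [lt0 E0 H0]] := Ophi t lt.
apply/lexltP; exists t0; split=> //; first by rewrite !ffunE E0.
move=> t' lt'; rewrite !ffunE.
case: (absB_small (H0 t' lt')) => [->|[q' [l1 l2 [->|->]]]].
- by rewrite !mor_center.
- exact: h2.
- by rewrite !mor_val_sigma // h2 // ex.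
Qed.

Definition first_occ m x (f : {ffun obj m -> obj x}) (q : nat) : bool :=
  (absB (f (pos m q)) != 0) &&
  all (fun q' => absB (f (pos m q')) != absB (f (pos m q))) (iota 0 q).

Lemma first_occP m x (f : {ffun obj m -> obj x}) q :
  reflect (absB (f (pos m q)) <> 0 /\
    forall q', q' < q -> absB (f (pos m q')) <> absB (f (pos m q))) (first_occ f q).
Proof.
apply: (iffP andP) => [[/eqP h /allP h2]|[/eqP h h2]]; split=> //.
  by move=> q' lt; apply/eqP; apply: h2; rewrite mem_iota.
by apply/allP => q'; rewrite mem_iota add0n => /andP[_ lt]; apply/eqP; apply: h2.
Qed.

(** Factorization through an ordered surjection: if the positive points of
    [[-n, n]] embed increasingly (via [e]) into those of [[-p, p]], matching
    the values and the first-occurrence flags of [f] and [g], then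
    [g = f \o phi] for an ordered surjection [phi]. *)
Section Factorization.
Variables (n p x : nat) (f : {ffun obj n -> obj x}) (g : {ffun obj p -> obj x})
  (e : nat -> nat).
Hypotheses (f_mor : is_mor f) (g_mor : is_mor g)
  (e_lt : forall q, q < n -> e q < p)
  (e_incr : forall q q', q < q' -> q' < n -> e q < e q')
  (e_match : forall q, q < n ->
     nat_of_ord (g (pos p (e q))) = f (pos n q) /\ first_occ g (e q) = first_occ f q).

Lemma e_mono q q' : q <= q' -> q' < n -> e q <= e q'.
Proof. by rewrite leq_eqVlt => /orP[/eqP->//|lt] ln; exact/ltnW/e_incr. Qed.

Definition fact_pos (t : nat) : obj n :=
  match [pick q : 'I_n | e q == t] with
  | Some q => pos n q
  | None => if absB (g (pos p t)) == 0 then center n else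
     match [pick q : 'I_n | first_occ f q && (absB (f (pos n q)) == absB (g (pos p t)))] with
     | Some q0 => if nat_of_ord (g (pos p t)) == f (pos n q0) then pos n q0
                  else sigmaB (pos n q0)
     | None => center n end end.

(** The odd extension of [fact_pos] to [[-p, p]]. *)
Definition fact_map : {ffun obj p -> obj n} :=
  [ffun u : obj p => if p < u then fact_pos (u - p.+1)
     else if nat_of_ord u == p then center n else sigmaB (fact_pos (p - u.+1))].

Lemma g_fact_pos t : t < p -> nat_of_ord (g (pos p t)) = f (fact_pos t).
Proof.
move=> lt; rewrite /fact_pos; case: pickP => [q /eqP <-|Hnone].
  by rewrite (e_match (ltn_ord q)).1.
case: eqP => [/absB0 ->|nz]; first by rewrite mor_center.
case: pickP => [q0 /andP[_ /eqP A]|Hn2].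
  case: eqP => // ne; rewrite mor_val_sigma //.
  have := val_obj (g (pos p t)); have := val_obj (f (pos n q0)).
  by case: (absB_eq A); lia.
exfalso; have j_pos : 0 < absB (g (pos p t)) by lia.
have q_ex := mor_absB_attained f_mor j_pos (absB_le _).
case: (ex_minnP q_ex) => q /andP[lq /eqP Aq] Hmin.
have := Hn2 (Ordinal lq); rewrite /= Aq eqxx andbT => /negP; apply.
apply/first_occP; split; first by rewrite Aq.
move=> q' lt' E; have := Hmin q'; rewrite (ltn_trans lt' lq) E Aq eqxx => /(_ isT).
by rewrite leqNgt lt'.
Qed.

Lemma fact_pos_e q : q < n -> fact_pos (e q) = pos n q.
Proof.
move=> lq; rewrite /fact_pos; case: pickP => [q' /eqP E|H]; last first.
  by have := H (Ordinal lq); rewrite /= eqxx.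
congr pos; case: (ltngtP q' q) => // c.
- by have := e_incr c lq; rewrite E ltnn.
- by have := e_incr c (ltn_ord q'); rewrite E ltnn.
Qed.

(** Points before [e q] have images of absolute value at most [q]: this is
    the orderedness of [fact_map]. *)
Lemma fact_pos_small q t : q < n -> t < e q -> absB (fact_pos t) <= q.
Proof.
move=> lq lt; rewrite /fact_pos; case: pickP => [q' /eqP E|Hnone].
  rewrite absB_pos //; case: (ltnP q' q) => // c.
  by have := e_mono c (ltn_ord q'); rewrite E; lia.
case: eqP => [_|nz]; first by rewrite absB_center.
case: pickP => [q0 /andP[F0 /eqP A]|_]; last by rewrite absB_center.
have lt0 : e q0 < t.
  have [g1 g2] := e_match (ltn_ord q0).
  have /first_occP [_ Hfg] : first_occ g (e q0) by rewrite g2.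
  have Ag : absB (g (pos p (e q0))) = absB (g (pos p t)).
    by rewrite /absB g1 -/(absB _) A.
  case: (ltngtP (e q0) t) => // c.
  - by exfalso; apply: (Hfg t c); rewrite Ag.
  - by exfalso; have := Hnone q0; rewrite /= c eqxx.
have lq0 : q0 < q by case: (ltnP q0 q) => // c; have := e_mono c (ltn_ord q0); lia.
by case: eqP => _; rewrite ?absB_sigma absB_pos.
Qed.

Lemma fact_map_pos t : t < p -> fact_map (pos p t) = fact_pos t.
Proof.
move=> lt; rewrite /fact_map ffunE val_pos // ifT; last by lia.
by have -> : p + t.+1 - p.+1 = t by lia.
Qed.

Lemma fact_map_center : fact_map (center p) = center n.
Proof. by rewrite /fact_map ffunE /= ltnn eqxx. Qed.

Lemma fact_map_sigma t : t < p -> fact_map (sigmaB (pos p t)) = sigmaB (fact_pos t).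
Proof.
move=> lt; rewrite /fact_map ffunE val_sigma val_pos // ifF; last by lia.
rewrite ifF; last by apply/eqP; lia.
by have -> : p - (2 * p - (p + t.+1)).+1 = t by lia.
Qed.

Lemma fact_map_os : os_mor fact_map.
Proof.
split; last first.
  move=> q lq; exists (e q); split; first exact: e_lt.
    by rewrite fact_map_pos ?e_lt // fact_pos_e.
  move=> t' lt'; rewrite fact_map_pos; last exact: ltn_trans lt' (e_lt lq).
  exact: fact_pos_small lq lt'.
apply/andP; split.
  apply/forallP => u; apply/eqP.
  case: (obj_cases u) => [->|[[t lt ->]|[t lt ->]]].
  - by rewrite sigma_center fact_map_center sigma_center.
  - by rewrite fact_map_sigma // fact_map_pos.
  - by rewrite sigmaK fact_map_pos // fact_map_sigma // sigmaK.
apply/forallP => v; apply/existsP.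
case: (obj_cases v) => [->|[[q lq ->]|[q lq ->]]].
- by exists (center p); rewrite fact_map_center.
- by exists (pos p (e q)); rewrite fact_map_pos ?e_lt // fact_pos_e.
- by exists (sigmaB (pos p (e q))); rewrite fact_map_sigma ?e_lt // fact_pos_e.
Qed.

Lemma fact_map_spec u : nat_of_ord (g u) = comp_mor f fact_map u.
Proof.
rewrite ffunE; case: (obj_cases u) => [->|[[t lt ->]|[t lt ->]]].
- by rewrite fact_map_center !mor_center.
- by rewrite fact_map_pos // g_fact_pos.
- by rewrite fact_map_sigma // !mor_val_sigma // g_fact_pos.
Qed.
End Factorization.

Lemma subseq_embedding (T : eqType) (d : T) (s1 s2 : seq T) : subseq s1 s2 ->
  exists e : nat -> nat,
    (forall q, q < size s1 -> e q < size s2 /\ nth d s1 q = nth d s2 (e q)) /\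
    (forall q q', q < q' -> q' < size s1 -> e q < e q').
Proof.
elim: s2 s1 => [|y s2 IH] [|z s1] //=; try by move=> _; exists id.
case: eqP => [<-|ne] /IH [e [e1 e2]].
  exists (fun q => if q is q'.+1 then (e q').+1 else 0); split.
    by case=> [//|q] /= /e1.
  by move=> [|q] [|q'] //=; rewrite !ltnS; exact: e2.
exists (fun q => (e q).+1); split; first by move=> q /e1.
by move=> q q' lt lt'; rewrite ltnS; apply: e2.
Qed.

Section Monomials.
Variables (r : nat) (deg : 'I_r -> nat).

(** Monomials of degree [m]: basis elements [f : m -> deg i] of the principal
    projective [P (deg i)] at [m], for some generator index [i]. *)
Definition Mon (m : nat) : finType := {i : 'I_r & {ffun obj m -> obj (deg i)}}.

Definition is_mon m (mu : Mon m) : bool := is_mor (tagged mu).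

Definition mon_comp m p (mu : Mon m) (phi : {ffun obj p -> obj m}) : Mon p :=
  Tagged (fun i => {ffun obj p -> obj (deg i)}) (comp_mor (tagged mu) phi).

Definition mon_lt m (mu nu : Mon m) : bool :=
  (tag mu < tag nu) || ((tag mu == tag nu) && lexlt (tagged mu) (tagged nu)).

Lemma monP m (mu nu : Mon m) : tag mu = tag nu ->
  (forall w, nat_of_ord (tagged mu w) = tagged nu w) -> mu = nu.
Proof.
case: mu => i f; case: nu => i' f' /= E; subst i' => H.
by congr Tagged; apply/ffunP => w; apply: ord_inj; exact: H.
Qed.

Lemma mon_compA m p a (mu : Mon m) (phi : {ffun obj p -> obj m})
  (psi : {ffun obj a -> obj p}) :
  mon_comp (mon_comp mu phi) psi = mon_comp mu (comp_mor phi psi).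
Proof. by apply: monP => //= w; rewrite !ffunE. Qed.

Lemma mon_comp_is_mon m p (mu : Mon m) (phi : {ffun obj p -> obj m}) :
  is_mon mu -> is_mor phi -> is_mon (mon_comp mu phi).
Proof. by move=> Hmu Hphi; apply: comp_is_mor. Qed.

Lemma mon_comp_inj m p (mu nu : Mon m) (phi : {ffun obj p -> obj m}) :
  is_mor phi -> mon_comp mu phi = mon_comp nu phi -> mu = nu.
Proof.
move=> H E; apply: monP; first exact: (congr1 (fun z => tag z) E).
apply: (mor_comp_cancel H) => u.
exact: (congr1 (fun z : Mon p => nat_of_ord (tagged z u)) E).
Qed.

Lemma mon_lt_irr m (mu : Mon m) : ~~ mon_lt mu mu.
Proof. by rewrite /mon_lt ltnn eqxx /= lexlt_irr. Qed.

Lemma mon_lt_trans m (mu nu xi : Mon m) : mon_lt mu nu -> mon_lt nu xi -> mon_lt mu xi.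
Proof.
rewrite /mon_lt => /orP[h1|/andP[/eqP e1 h1]] /orP[h2|/andP[/eqP e2 h2]].
- by rewrite (ltn_trans h1 h2).
- by apply/orP; left; rewrite -e2.
- by apply/orP; left; rewrite e1.
- by apply/orP; right; rewrite (lexlt_trans h1 h2) andbT e1 e2.
Qed.

Lemma mon_lt_total m (mu nu : Mon m) :
  is_mon mu -> is_mon nu -> mu <> nu -> mon_lt mu nu \/ mon_lt nu mu.
Proof.
move=> H1 H2 ne; rewrite /mon_lt.
case: (ltngtP (tag mu) (tag nu)) => c; [by left|by right|].
have ct : tag mu = tag nu by apply: ord_inj.
rewrite (introT eqP ct) (introT eqP (esym ct)) /=; apply: lexlt_total => //; first by rewrite ct.
apply: NNPP => H; apply: ne; apply: monP => // w.
by apply: NNPP => H'; apply: H; exists w.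
Qed.

Lemma mon_lt_comp m p (mu nu : Mon m) (phi : {ffun obj p -> obj m}) :
  os_mor phi -> is_mon mu -> is_mon nu -> mon_lt mu nu ->
  mon_lt (mon_comp mu phi) (mon_comp nu phi).
Proof.
move=> Hphi H1 H2; rewrite /mon_lt /= => /orP[->//|/andP[/eqP e h]].
rewrite (introT eqP e) /=; apply/orP; right; apply: lexlt_comp => //; by rewrite e.
Qed.

Definition AnyMon := {m : nat & Mon m}.

Definition valid_mon (u : AnyMon) : Prop := is_mon (tagged u).

Definition mon_dvd (u v : AnyMon) : Prop :=
  exists phi : {ffun obj (tag v) -> obj (tag u)},
    os_mor phi /\ tagged v = mon_comp (tagged u) phi.

Lemma mon_dvd_trans (u v w : AnyMon) : mon_dvd u v -> mon_dvd v w -> mon_dvd u w.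
Proof.
move=> [phi [O1 E1]] [psi [O2 E2]]; exists (comp_mor phi psi); split.
  exact: os_comp.
by rewrite E2 E1 mon_compA.
Qed.

Definition max_deg : nat := (\max_(i < r) (2 * deg i))%N.

Definition letter m (mu : Mon m) (q : nat) : 'I_r + ('I_max_deg.+1 * bool) :=
  inr (inord (nat_of_ord (tagged mu (pos m q))), first_occ (tagged mu) q).

Definition mon_word (u : AnyMon) : seq ('I_r + ('I_max_deg.+1 * bool)) :=
  inl (tag (tagged u)) :: [seq letter (tagged u) q | q <- iota 0 (tag u)].

Lemma mon_word_dvd (u v : AnyMon) : valid_mon u -> valid_mon v ->
  subseq (mon_word u) (mon_word v) -> mon_dvd u v.
Proof.
case: u => n [i f]; case: v => p [i' g]; rewrite /valid_mon /is_mon /mon_word /= => Hf Hg.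
case: eqP => [[E]|ne]; last first.
  move/mem_subseq => /(_ (inl i)); rewrite mem_head => /(_ isT) /mapP [q _].
  by rewrite /letter.
subst i' => /(subseq_embedding (inl i)) [e []].
rewrite !size_map !size_iota => e_match e_incr.
have deg_le : 2 * deg i <= max_deg by exact: leq_bigmax.
have val_lt (w : obj (deg i)) : nat_of_ord w < max_deg.+1.
  by have := val_obj w; lia.
have e_match' q : q < n ->
    nat_of_ord (g (pos p (e q))) = f (pos n q) /\ first_occ g (e q) = first_occ f q.
  move=> lq; have [_] := e_match q lq.
  rewrite !(nth_map 0) ?size_iota ?(e_match q lq).1 // !nth_iota ?(e_match q lq).1 //.
  rewrite !add0n /letter => -[E1 ->]; split=> //.
  by have := congr1 (@nat_of_ord _) E1; rewrite !inordK.
have e_lt q : q < n -> e q < p by move=> /e_match [].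
exists (fact_map f g e); split; first exact: (fact_map_os Hf Hg e_lt e_incr e_match').
by apply: monP => //= w; rewrite (fact_map_spec Hf Hg e_match').
Qed.

Lemma mon_dvd_wqo : wqo_on valid_mon mon_dvd.
Proof.
move=> s H; have [i [j [lt sub]]] := higman (fun j => mon_word (s j)).
by exists i, j; split=> //; apply: mon_word_dvd.
Qed.
End Monomials.

Local Open Scope ring_scope.

Lemma act0 (k : pzRingType) (M : FSBop_module k) n m (f : {ffun obj n -> obj m}) :
  is_mor f -> act M f 0 = 0.
Proof.
move=> H; have := @act_add _ M _ _ f 0 0 H; rewrite addr0 => /eqP.
by rewrite -subr_eq subrr eq_sym => /eqP.
Qed.

Lemma act_sum (k : pzRingType) (M : FSBop_module k) n m (f : {ffun obj n -> obj m})
  (I : Type) (s : seq I) (P : pred I) (F : I -> M m) :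
  is_mor f -> act M f (\sum_(i <- s | P i) F i) = \sum_(i <- s | P i) act M f (F i).
Proof.
by move=> H; apply: (big_morph (act M f)) => [a b|]; [exact: act_add | exact: act0].
Qed.

Section Submodule.
Variables (k : pzRingType) (M : FSBop_module k) (N : forall n, M n -> Prop).
Hypothesis N_sub : is_submodule N.

Lemma submodB m (y z : M m) : N y -> N z -> N (y - z).
Proof.
by case: N_sub => _ ND NZ _ Hy Hz; rewrite -scaleN1r; apply: ND => //; exact: NZ.
Qed.

Lemma submod_sum m J (F : 'I_J -> M m) : (forall j, N (F j)) -> N (\sum_(j < J) F j).
Proof.
case: N_sub => N0 ND _ _ H.
by apply: (big_ind (@N m)) => [|a b|j _]; [exact: N0 | exact: ND | exact: H].
Qed.
End Submodule.

Section Expansion.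
Variables (k : pzRingType) (M : FSBop_module k) (r : nat) (deg : 'I_r -> nat)
  (x : forall i, M (deg i)).

Definition expand m (c : Mon deg m -> k) : M m :=
  \sum_(mu : Mon deg m | is_mon mu) c mu *: act M (tagged mu) (x (tag mu)).

Lemma generated_byE m (y : M m) :
  generated_by x y <-> exists c : Mon deg m -> k, y = expand c.
Proof.
rewrite /generated_by; split=> [[c ->]|[c ->]].
  by exists (fun mu => c (tag mu) (tagged mu)); rewrite sig_big_dep.
by exists (fun i f => c (Tagged _ f)); rewrite sig_big_dep; apply: eq_bigr => -[].
Qed.

Lemma expand0 m (c : Mon deg m -> k) : (forall mu, is_mon mu -> c mu = 0) -> expand c = 0.
Proof. by move=> H; rewrite /expand big1 // => mu /H ->; rewrite scale0r. Qed.

(** [expand] is linear; the case needed to subtract basis multiples. *)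
Lemma expand_lin m (c : Mon deg m -> k) J (b : 'I_J -> k) (W : 'I_J -> Mon deg m -> k) :
  expand (fun mu => c mu - \sum_(j < J) b j * W j mu) =
  expand c - \sum_(j < J) b j *: expand (W j).
Proof.
rewrite /expand.
have -> : \sum_(j < J) b j *: (\sum_(mu : Mon deg m | is_mon mu)
      W j mu *: act M (tagged mu) (x (tag mu))) =
    \sum_(mu : Mon deg m | is_mon mu)
      (\sum_(j < J) b j * W j mu) *: act M (tagged mu) (x (tag mu)).
  under eq_bigr do rewrite scaler_sumr.
  rewrite exchange_big; apply: eq_bigr => mu _; rewrite scaler_suml.
  by apply: eq_bigr => j _; rewrite scalerA.
by rewrite -sumrB; apply: eq_bigr => mu _; rewrite scalerBl.
Qed.

(** The coefficients of [act phi (expand c)]: pullback along [phi]. *)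
Definition pullback m p (phi : {ffun obj p -> obj m}) (c : Mon deg m -> k) : Mon deg p -> k :=
  fun nu => \sum_(mu : Mon deg m | is_mon mu && (mon_comp mu phi == nu)) c mu.

Lemma expand_pullback m p (phi : {ffun obj p -> obj m}) (c : Mon deg m -> k) :
  is_mor phi -> expand (pullback phi c) = act M phi (expand c).
Proof.
move=> H; rewrite /expand act_sum //.
under [RHS]eq_bigr => mu Hmu do rewrite act_scale // -act_comp //.
rewrite (partition_big (fun mu => mon_comp mu phi) (@is_mon _ _ _)); last first.
  by move=> mu Hmu; apply: mon_comp_is_mon.
apply: eq_bigr => nu Hnu; rewrite /pullback scaler_suml.
by apply: eq_bigr => mu /andP[_ /eqP <-].
Qed.

Definition leading m (mu0 : Mon deg m) (c : Mon deg m -> k) : Prop :=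
  forall mu, is_mon mu -> mon_lt mu0 mu -> c mu = 0.

Lemma pullback_leading m p (phi : {ffun obj p -> obj m}) (mu0 : Mon deg m)
  (c : Mon deg m -> k) : os_mor phi -> is_mon mu0 -> leading mu0 c ->
  leading (mon_comp mu0 phi) (pullback phi c) /\
  pullback phi c (mon_comp mu0 phi) = c mu0.
Proof.
move=> [Mphi Ophi] H0 Hz; split.
  move=> nu Hnu lt; rewrite /pullback big1 // => mu /andP[Hmu /eqP E].
  case: (eqVneq mu mu0) => [Em|ne].
    by move: lt; rewrite -E Em (negbTE (mon_lt_irr _)).
  case: (mon_lt_total Hmu H0 (elimN eqP ne)) => h; last exact: Hz.
  have h' := mon_lt_comp (conj Mphi Ophi) Hmu H0 h.
  by move: (mon_lt_trans h' lt); rewrite E (negbTE (mon_lt_irr _)).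
rewrite /pullback (bigD1 mu0) /=; last by rewrite H0 eqxx.
rewrite big1 ?addr0 // => mu /andP[/andP[Hmu /eqP E] ne].
by rewrite (mon_comp_inj Mphi E) eqxx in ne.
Qed.

Definition rank m (mu : Mon deg m) : nat :=
  #|[pred nu : Mon deg m | is_mon nu && mon_lt nu mu]|.

Lemma rank_lt m (mu nu : Mon deg m) : is_mon mu -> mon_lt mu nu -> (rank mu < rank nu)%N.
Proof.
move=> Hmu lt; apply: proper_card; apply/properP; split.
  by apply/subsetP => z; rewrite !inE => /andP[Hz lz]; rewrite Hz (mon_lt_trans lz lt).
by exists mu; rewrite !inE ?Hmu ?lt ?(negbTE (mon_lt_irr _)).
Qed.

(** A nonzero coefficient vector has a leading monomial with nonzero
    coefficient: take one of maximal rank. *)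
Lemma exists_leading m (c : Mon deg m -> k) (mu1 : Mon deg m) :
  is_mon mu1 -> c mu1 != 0 ->
  exists mu0, [/\ is_mon mu0, c mu0 != 0 & leading mu0 c].
Proof.
move=> H1 nz1; have P1 : is_mon mu1 && (c mu1 != 0) by rewrite H1.
case: (@arg_maxnP _ mu1 (fun mu => is_mon mu && (c mu != 0)) (@rank m) P1).
move=> mu0 /andP[H0 nz0] Hmax.
exists mu0; split=> // mu Hmu lt; apply/eqP; apply: contraT => nz.
have := Hmax mu; rewrite Hmu nz => /(_ isT) /(leq_trans (rank_lt H0 lt)).
by rewrite ltnn.
Qed.
End Expansion.

Section Generation.
Variables (k : pzRingType) (M : FSBop_module k) (r : nat) (deg : 'I_r -> nat)
  (x : forall i, M (deg i)) (m : nat).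

Lemma generated0 : generated_by x (0 : M m).
Proof. by apply/generated_byE; exists (fun _ => 0); rewrite expand0. Qed.

Lemma generatedD (y1 y2 : M m) :
  generated_by x y1 -> generated_by x y2 -> generated_by x (y1 + y2).
Proof.
move=> [c1 ->] [c2 ->]; exists (fun i f => c1 i f + c2 i f).
rewrite -big_split; apply: eq_bigr => i _; rewrite -big_split; apply: eq_bigr => f _.
by rewrite scalerDl.
Qed.

Lemma generatedZ (y : M m) (a : k) : generated_by x y -> generated_by x (a *: y).
Proof.
move=> [c ->]; exists (fun i f => a * c i f).
rewrite scaler_sumr; apply: eq_bigr => i _; rewrite scaler_sumr; apply: eq_bigr => f _.
by rewrite scalerA.
Qed.

Lemma generated_sum J (F : 'I_J -> M m) :
  (forall j, generated_by x (F j)) -> generated_by x (\sum_(j < J) F j).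
Proof.
move=> H; apply: (big_ind (@generated_by _ M _ _ x m)) => [|a b|j _];
  [exact: generated0 | exact: generatedD | exact: H].
Qed.

Lemma generated_act (j : 'I_r) (phi : {ffun obj m -> obj (deg j)}) :
  is_mor phi -> generated_by x (act M phi (x j)).
Proof.
move=> H; pose mu : Mon deg m := Tagged (fun i => {ffun obj m -> obj (deg i)}) phi.
apply/generated_byE; exists (fun nu => if nu == mu then 1 else 0).
rewrite /expand (bigD1 mu) //= eqxx scale1r big1 ?addr0 // => nu /andP[_ /negbTE ->].
by rewrite scale0r.
Qed.
End Generation.

Section Reduction.
Variables (k : pzRingType) (M : FSBop_module k) (N : forall n, M n -> Prop)
  (r : nat) (deg : 'I_r -> nat) (x : forall i, M (deg i)).
Hypothesis N_sub : is_submodule N.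

Definition lead_ideal (u : AnyMon deg) (a : k) : Prop :=
  exists c : Mon deg (tag u) -> k,
    [/\ N (expand x c), leading (tagged u) c & c (tagged u) = a].

(** A Groebner basis of [N]: elements [expand (v j)] of [N] with leading
    monomials [us j] and leading coefficients [as_ j] generating every leading
    coefficient ideal, as in [wqo_basis]. *)
Variables (J : nat) (us : 'I_J -> AnyMon deg) (as_ : 'I_J -> k)
  (v : forall j, Mon deg (tag (us j)) -> k).
Arguments v : clear implicits.
Hypotheses (us_valid : forall j : 'I_J, valid_mon (us j))
  (v_lead : forall j : 'I_J, [/\ N (expand x (v j)), leading (tagged (us j)) (v j) &
                          v j (tagged (us j)) = as_ j])
  (basis : forall u a, valid_mon u -> lead_ideal u a ->
     exists b : 'I_J -> k, a = \sum_(j < J) b j * as_ j /\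
       forall j, b j != 0 -> mon_dvd (us j) u).

Definition basis_elt (j : 'I_J) : M (tag (us j)) := expand x (v j).

Lemma basis_multiple j m (mu0 : Mon deg m) :
  mon_dvd (us j) (Tagged (fun m => Mon deg m) mu0) ->
  exists w, [/\ N (expand x w), generated_by basis_elt (expand x w),
                leading mu0 w & w mu0 = as_ j].
Proof.
move=> [/= phi [phi_os ->]]; have [Nv lead_v top_v] := v_lead j.
have [lead_w top_w] := pullback_leading phi_os (us_valid j) lead_v.
exists (pullback phi (v j)); rewrite expand_pullback; last exact: phi_os.1.
split=> //; last by rewrite top_w.
  by case: N_sub => _ _ _ Nact; apply: Nact Nv; exact: phi_os.1.
exact: generated_act phi_os.1.
Qed.

Lemma cancel_leading m (c : Mon deg m -> k) (mu0 : Mon deg m) :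
  is_mon mu0 -> leading mu0 c -> N (expand x c) ->
  exists c', [/\ N (expand x c'), generated_by basis_elt (expand x c - expand x c'),
                 leading mu0 c' & c' mu0 = 0].
Proof.
move=> H0 lead_c Nc.
have [b [Eb Hb]] := basis (u := Tagged (fun m => Mon deg m) mu0) H0
  (ex_intro _ c (And3 Nc lead_c erefl)).
have HW j : exists w, [/\ N (expand x w), generated_by basis_elt (expand x w),
                          leading mu0 w & b j * w mu0 = b j * as_ j].
  case: (eqVneq (b j) 0) => [->|/Hb /basis_multiple [w [Nw Gw lead_w top_w]]].
    exists (fun _ => 0); rewrite expand0 // !mul0r; split=> //; last exact: generated0.
    by case: N_sub.
  by exists w; rewrite top_w.
have [W HWj] := choice_fun HW.
pose c' mu := c mu - \sum_(j < J) b j * W j mu.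
have Ec' : expand x c' = expand x c - \sum_(j < J) b j *: expand x (W j).
  exact: expand_lin.
exists c'; split.
- rewrite Ec'; apply: submodB => //; apply: submod_sum => // j.
  by case: N_sub => _ _ NZ _; apply: NZ; case: (HWj j).
- rewrite Ec' opprB addrC subrK; apply: generated_sum => j; apply: generatedZ.
  by case: (HWj j).
- move=> mu Hmu lt; rewrite /c' lead_c // big1 ?subrr // => j _.
  by case: (HWj j) => _ _ lead_w _; rewrite lead_w // mulr0.
- rewrite /c' (eq_bigr (fun j => b j * as_ j)) => [|j _]; last by case: (HWj j).
  by rewrite -Eb subrr.
Qed.

(** Every element of [N] is generated by the basis elements: repeatedly
    cancel the leading term, by induction on a bound for the ranks of the
    monomials occurring in [c]. *)
Lemma basis_generates m (c : Mon deg m -> k) :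
  N (expand x c) -> generated_by basis_elt (expand x c).
Proof.
suff reduce nb (c' : Mon deg m -> k) : N (expand x c') ->
    (forall mu, is_mon mu -> c' mu != 0 -> (rank mu < nb)%N) ->
    generated_by basis_elt (expand x c').
  by move=> Nc; apply: (reduce #|Mon deg m|.+1) => // mu _ _; rewrite ltnS max_card.
elim: nb c' => [|nb IH] c' Nc' Hrank.
  rewrite expand0; first exact: generated0.
  by move=> mu Hmu; apply/eqP; apply: contraT => /(Hrank _ Hmu).
case: (boolP [exists mu, is_mon mu && (c' mu != 0)]) => [/existsP [mu1 /andP[H1 nz1]]|none].
  have [mu0 [H0 nz0 lead0]] := exists_leading H1 nz1.
  have [c'' [Nc'' Gdiff lead'' top'']] := cancel_leading H0 lead0 Nc'.
  rewrite -(subrK (expand x c'') (expand x c')) addrC.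
  apply: generatedD Gdiff; apply: IH Nc'' _ => mu Hmu nz.
  have ne : mu <> mu0 by move=> E; rewrite E top'' eqxx in nz.
  case: (mon_lt_total Hmu H0 ne) => [lt|lt]; last by rewrite lead'' ?eqxx in nz.
  by have := rank_lt Hmu lt; have := Hrank mu0 H0 nz0; lia.
rewrite expand0; first exact: generated0.
move=> mu Hmu; apply/eqP; apply: contraNT none => nz.
by apply/existsP; exists mu; rewrite Hmu.
Qed.
End Reduction.

Theorem mainTheorem1 (k : pzRingType) (M : FSBop_module k)
  (N : forall n : nat, M n -> Prop) :
  left_noetherian k -> fg_module M -> is_submodule N -> fg_submodule N.
Proof.
move=> noeth [r [deg [x [_ gen]]]] N_sub.
have [J [us [as_ [Hus basis]]]] := wqo_basis (lead_ideal N x) noeth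
  (@mon_dvd_trans _ deg) (@mon_dvd_wqo _ deg).
have us_valid j : valid_mon (us j) by case: (Hus j).
have [v v_lead] := choice_fun (fun j => (Hus j).2).
exists J, (fun j => tag (us j)), (basis_elt x v); split=> [j|m y Ny].
  by case: (v_lead j).
have [c Ey] := (generated_byE x y).1 (gen m y Logic.I).
by rewrite Ey in Ny *; exact: (basis_generates N_sub us_valid v_lead basis Ny).
Qed.
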